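(* There exist absolute constants $C_1,C_2>0$ such that the following holds. Let $P_*\in\mathcal N(n,K_*,L_* )$ be the true probability matrix, with parameters satisfying Assumptions A1 and A2, and let $A$ be generated from $P_*$ as in the network model. For $1\le L\le K\le n$ set $$\mathrm{Pen}(K,L)=C_1(nL+K^2)\ln n+C_2\, n\ln K .$$ Let $(\hat K,\hat L,\hat P)$ be a solution of $$(\hat K,\hat L,\hat P)\in\operatorname*{argmin}_{1\le L\le K\le n,\ P\in\mathcal N(n,K,L)}\Big\{\|A-P\|_F^2+\mathrm{Pen}(K,L)\Big\}.$$ Then for any $K,L$ with $1\le L\le K\le n$ and any $P\in\mathcal N(n,K,L)$, $$\mathbb P\Big\{\|\hat P-P_*\|_F^2\le 3\big[\|P-P_*\|_F^2+\mathrm{Pen}(K,L)\big]\Big\}\ge 1-(n^2\log_2 n+1)e^{-n/32},$$ and $$\mathbb E\|\hat P-P_*\|_F^2\le 3\big[\|P-P_*\|_F^2+\mathrm{Pen}(K,L)\big]+n^5e^{-n/32}.$$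
   Context: Network model: $n\ge 2$ nodes; $P_*\in[0,1]^{n\times n}$ is symmetric; $A\in\{0,1\}^{n\times n}$ is symmetric with entries $A_{ij}$, $1\le i\le j\le n$, independent, $A_{ij}\sim\mathrm{Bernoulli}((P_* )_{ij})$, and $A_{ji}=A_{ij}$. Nested Block Model class: for integers $1\le L\le K\le n$, $\mathcal N(n,K,L)$ is the set of matrices $P\in[0,1]^{n\times n}$ for which there exist a clustering function $z:\{1,\dots,n\}\to\{1,\dots,K\}$ (communities), a clustering function $c:\{1,\dots,K\}\to\{1,\dots,L\}$ (meta-communities), a matrix $B\in[0,1]^{K\times K}$ and a matrix $H\in\mathbb R_+^{n\times L}$ such that, with $n_k=\#\{i:z(i)=k\}$, $$\sum_{i:\,z(i)=k}H_{i,l}=n_k\quad\text{for all }k\le K,\ l\le L,$$ and $$P_{ij}=B_{z(i),z(j)}\,H_{i,c(z(j))}\,H_{j,c(z(i))}\quad\text{for all }i,j.$$ For such a representation, $h^{(k,l)}\in\mathbb R_+^{n_k}$ denotes the subvector $(H_{i,l})_{i:\,z(i)=k}$. Assumptions on the true matrix $P_*\in\mathcal N(n,K_*,L_* )$ with representation $(z_*,c_*,B,H)$: - A1: $B$ is nonsingular with smallest singular value at least $\lambda_0>0$. - A2: for each $k=1,\dots,K_*$, the vectors $h^{(k,l)}$, $l=1,\dots,L_*$, are linearly independent. *)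

From Stdlib Require Import Reals List Arith.
Import ListNotations.
Open Scope R_scope.

(* Matrices / vectors are functions on nat; only indices < dimension matter.
   Indices are 0-based: nodes 0..n-1, communities 0..K-1, meta-communities 0..L-1. *)

Fixpoint rsum (m : nat) (f : nat -> R) : R :=
  match m with
  | O => 0
  | S k => rsum k f + f k
  end.

Definition rprod (l : list (nat * nat)) (f : nat -> nat -> R) : R :=
  fold_right (fun p acc => f (fst p) (snd p) * acc) 1 l.

Definition NBM_rep (n K L : nat) (P : nat -> nat -> R)
  (z : nat -> nat) (c : nat -> nat) (B : nat -> nat -> R) (H : nat -> nat -> R) : Prop :=
  (forall i, (i < n)%nat -> (z i < K)%nat) /\
  (forall k, (k < K)%nat -> (c k < L)%nat) /\
  (forall k k', (k < K)%nat -> (k' < K)%nat -> 0 <= B k k' <= 1) /\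
  (forall i l, (i < n)%nat -> (l < L)%nat -> 0 <= H i l) /\
  (forall k l, (k < K)%nat -> (l < L)%nat ->
     rsum n (fun i => if Nat.eqb (z i) k then H i l else 0)
     = rsum n (fun i => if Nat.eqb (z i) k then 1 else 0)) /\
  (forall i j, (i < n)%nat -> (j < n)%nat -> 0 <= P i j <= 1) /\
  (forall i j, (i < n)%nat -> (j < n)%nat ->
     P i j = B (z i) (z j) * H i (c (z j)) * H j (c (z i))).

Definition in_NBM (n K L : nat) (P : nat -> nat -> R) : Prop :=
  exists z c B H, NBM_rep n K L P z c B H.

(* A1: the smallest singular value of the K x K matrix B is at least lam0,
   i.e. min_{|x|_2 = 1} |B x|_2 >= lam0, written homogeneously. *)
Definition min_sing_value_ge (K : nat) (B : nat -> nat -> R) (lam0 : R) : Prop :=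
  forall x : nat -> R,
    rsum K (fun k => (rsum K (fun k' => B k k' * x k'))^2)
    >= lam0^2 * rsum K (fun k => (x k)^2).

Definition A2_lin_indep (n K L : nat) (z : nat -> nat) (H : nat -> nat -> R) : Prop :=
  forall k, (k < K)%nat ->
    forall a : nat -> R,
      (forall i, (i < n)%nat -> z i = k -> rsum L (fun l => a l * H i l) = 0) ->
      forall l, (l < L)%nat -> a l = 0.

Definition frob2 (n : nat) (P Q : nat -> nat -> R) : R :=
  rsum n (fun i => rsum n (fun j => (P i j - Q i j)^2)).

Definition b2R (b : bool) : R := if b then 1 else 0.

Definition adjR (A : nat -> nat -> bool) : nat -> nat -> R := fun i j => b2R (A i j).

Definition upper_pairs (n : nat) : list (nat * nat) :=
  flat_map (fun j => map (fun i => (i, j)) (seq 0 (S j))) (seq 0 n).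

Definition setsym (A : nat -> nat -> bool) (i j : nat) (b : bool) : nat -> nat -> bool :=
  fun a b' => if ((Nat.eqb a i && Nat.eqb b' j) || (Nat.eqb a j && Nat.eqb b' i))%bool
              then b else A a b'.

(* Sum of F over all symmetric 0/1 adjacency matrices whose free entries are
   the pairs in l (all other entries 0). *)
Fixpoint sum_adj (l : list (nat * nat)) (F : (nat -> nat -> bool) -> R) : R :=
  match l with
  | [] => F (fun _ _ => false)
  | (i, j) :: t => sum_adj t (fun A => F (setsym A i j true) + F (setsym A i j false))
  end.

Definition adj_weight (n : nat) (P : nat -> nat -> R) (A : nat -> nat -> bool) : R :=
  rprod (upper_pairs n) (fun i j => if A i j then P i j else 1 - P i j).

Definition Expect (n : nat) (P : nat -> nat -> R) (X : (nat -> nat -> bool) -> R) : R :=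
  sum_adj (upper_pairs n) (fun A => adj_weight n P A * X A).

Definition Prob_le (n : nat) (P : nat -> nat -> R) (X Y : (nat -> nat -> bool) -> R) : R :=
  Expect n P (fun A => if Rle_dec (X A) (Y A) then 1 else 0).

Definition Pen (C1 C2 : R) (n K L : nat) : R :=
  C1 * (INR n * INR L + INR K ^ 2) * ln (INR n) + C2 * INR n * ln (INR K).

Definition objective (C1 C2 : R) (n K L : nat) (A : nat -> nat -> bool)
  (P : nat -> nat -> R) : R :=
  frob2 n (adjR A) P + Pen C1 C2 n K L.

Definition is_argmin (C1 C2 : R) (n : nat) (A : nat -> nat -> bool)
  (Kh Lh : nat) (Ph : nat -> nat -> R) : Prop :=
  (1 <= Lh)%nat /\ (Lh <= Kh)%nat /\ (Kh <= n)%nat /\ in_NBM n Kh Lh Ph /\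
  forall K L P, (1 <= L)%nat -> (L <= K)%nat -> (K <= n)%nat -> in_NBM n K L P ->
    objective C1 C2 n Kh Lh A Ph <= objective C1 C2 n K L A P.

From Stdlib Require Import Reals List Lra Lia IndefiniteDescription.
Import ListNotations.
Open Scope R_scope.

(* Expanding the square, [|A - Q|^2 = |A - P*|^2 - 2 <A - P*, Q - P*> + |Q - P*|^2], so
   comparing the objective at [Phat] and at a competitor [P] bounds [|Phat - P*|^2] by
   [|P - P*|^2], the penalties, and the two noise terms [<A - P*, P* - P>] and
   [<A - P*, Phat - P*>]. Each noise term [<A - P*, D>] is a sum of independent centred
   Bernoulli variables, so a Chernoff bound makes it smaller than [|D|^2/12 + s] except
   with probability [exp(-s/48)]. This handles the first term directly. For the second,
   [Phat] depends on [A]; it is replaced by a point of a finite net obtained by rounding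
   the parameters [B, H] of [N(n, Khat, Lhat)] to a grid of mesh [1/(3n^4)], which is
   entrywise within [1/n^2] of [Phat]. A union bound over all [Khat, Lhat] and all net
   points is paid for by the penalty, because the net of [N(n,K,L)] has at most
   [K^n n^(8(nL+K^2))] points. Outside an event of probability [(1 + n^2) exp(-n/32)]
   this gives the oracle inequality with constant 3; on that event [|Phat - P*|^2 <= n^2],
   which gives the bound in expectation. *)

Lemma exp_le x y : x <= y -> exp x <= exp y.
Proof. intros [h | ->]; [left; apply exp_increasing |]; lra. Qed.

Lemma ln_le x y : 0 < x -> x <= y -> ln x <= ln y.
Proof. intros Hx [h | ->]; [left; apply ln_increasing |]; lra. Qed.

Lemma pow_exp_ln a m : 0 < a -> a ^ m = exp (INR m * ln a).
Proof. intros Ha. rewrite <- ln_pow by auto. rewrite exp_ln; auto. apply pow_lt; auto. Qed.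

Lemma rsum_ext m f g : (forall i, (i < m)%nat -> f i = g i) -> rsum m f = rsum m g.
Proof.
  induction m as [|m IH]; intros Hfg; simpl; [reflexivity|].
  rewrite IH by (intros; apply Hfg; lia). rewrite Hfg by lia. reflexivity.
Qed.

Lemma rsum_le m f g : (forall i, (i < m)%nat -> f i <= g i) -> rsum m f <= rsum m g.
Proof.
  induction m as [|m IH]; intros Hfg; simpl; [lra|].
  apply Rplus_le_compat; [apply IH; intros |]; apply Hfg; lia.
Qed.

Lemma rsum_plus m f g : rsum m (fun i => f i + g i) = rsum m f + rsum m g.
Proof. induction m as [|m IH]; simpl; [lra|]. rewrite IH; lra. Qed.

Lemma rsum_scal m c f : rsum m (fun i => c * f i) = c * rsum m f.
Proof. induction m as [|m IH]; simpl; [lra|]. rewrite IH; lra. Qed.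

Lemma rsum_const m c : rsum m (fun _ => c) = INR m * c.
Proof. induction m as [|m IH]; simpl rsum; [simpl; lra|]. rewrite IH, S_INR; lra. Qed.

Lemma rsum_nonneg m f : (forall i, (i < m)%nat -> 0 <= f i) -> 0 <= rsum m f.
Proof.
  intros Hf. replace 0 with (rsum m (fun _ => 0)) by (rewrite rsum_const; lra).
  apply rsum_le; auto.
Qed.

Lemma rsum_ge_term m f i : (forall j, (j < m)%nat -> 0 <= f j) -> (i < m)%nat -> f i <= rsum m f.
Proof.
  induction m as [|m IH]; intros Hf Hi; simpl; [lia|].
  destruct (Nat.eq_dec i m) as [-> | Him].
  - pose proof (rsum_nonneg m f (fun j Hj => Hf j ltac:(lia))). lra.
  - pose proof (IH (fun j Hj => Hf j ltac:(lia)) ltac:(lia)). pose proof (Hf m ltac:(lia)). lra.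
Qed.

Fixpoint lsum {X : Type} (l : list X) (f : X -> R) : R :=
  match l with [] => 0 | x :: t => f x + lsum t f end.

Fixpoint lprod {X : Type} (l : list X) (f : X -> R) : R :=
  match l with [] => 1 | x :: t => f x * lprod t f end.

Section ListSums.
Context {X : Type}.
Implicit Types (l : list X) (f g : X -> R).

Lemma lsum_app l1 l2 f : lsum (l1 ++ l2) f = lsum l1 f + lsum l2 f.
Proof. induction l1 as [|x l1 IH]; simpl; [lra|]. rewrite IH; lra. Qed.

Lemma lsum_le l f g : (forall x, In x l -> f x <= g x) -> lsum l f <= lsum l g.
Proof.
  induction l as [|x l IH]; simpl; intros Hfg; [lra|].
  apply Rplus_le_compat; auto.
Qed.

Lemma lsum_ext l f g : (forall x, In x l -> f x = g x) -> lsum l f = lsum l g.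
Proof.
  intros Hfg. apply Rle_antisym; apply lsum_le; intros x Hx; rewrite Hfg; auto; lra.
Qed.

Lemma lsum_scal l c f : lsum l (fun x => c * f x) = c * lsum l f.
Proof. induction l as [|x l IH]; simpl; [lra|]. rewrite IH; lra. Qed.

Lemma lsum_const l c : lsum l (fun _ => c) = INR (length l) * c.
Proof. induction l as [|x l IH]; simpl lsum; simpl length; [simpl; lra|]. rewrite IH, S_INR; lra. Qed.

Lemma lsum_nonneg l f : (forall x, In x l -> 0 <= f x) -> 0 <= lsum l f.
Proof.
  intros Hf. replace 0 with (lsum l (fun _ => 0)) by (rewrite lsum_const; lra).
  apply lsum_le; auto.
Qed.

Lemma lsum_ge_member l f x : In x l -> (forall y, In y l -> 0 <= f y) -> f x <= lsum l f.
Proof.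
  induction l as [|y l IH]; simpl; intros Hx Hf; [contradiction|].
  pose proof (Hf y (or_introl eq_refl)).
  pose proof (lsum_nonneg l f (fun z Hz => Hf z (or_intror Hz))).
  destruct Hx as [<- | Hx]; [lra|].
  pose proof (IH Hx (fun z Hz => Hf z (or_intror Hz))). lra.
Qed.

Lemma lprod_ext l f g : (forall x, In x l -> f x = g x) -> lprod l f = lprod l g.
Proof.
  induction l as [|x l IH]; simpl; intros Hfg; [reflexivity|].
  rewrite Hfg, IH by auto. reflexivity.
Qed.

Lemma lprod_mult l f g : lprod l (fun x => f x * g x) = lprod l f * lprod l g.
Proof. induction l as [|x l IH]; simpl; [lra|]. rewrite IH; lra. Qed.

Lemma lprod_nonneg l f : (forall x, In x l -> 0 <= f x) -> 0 <= lprod l f.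
Proof.
  induction l as [|x l IH]; simpl; intros Hf; [lra|].
  apply Rmult_le_pos; auto.
Qed.

Lemma lprod_le l f g : (forall x, In x l -> 0 <= f x <= g x) -> lprod l f <= lprod l g.
Proof.
  induction l as [|x l IH]; simpl; intros Hfg; [lra|].
  pose proof (Hfg x (or_introl eq_refl)).
  pose proof (lprod_nonneg l f (fun y Hy => proj1 (Hfg y (or_intror Hy)))).
  apply Rmult_le_compat; try lra. auto.
Qed.

Lemma lprod_one l : lprod l (fun _ => 1) = 1.
Proof. induction l as [|x l IH]; simpl; [|rewrite IH]; lra. Qed.

Lemma exp_lsum l f : exp (lsum l f) = lprod l (fun x => exp (f x)).
Proof. induction l as [|x l IH]; simpl; [apply exp_0|]. rewrite exp_plus, IH; reflexivity. Qed.

End ListSums.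

Lemma lsum_map_pair_seq (j m : nat) (h : nat * nat -> R) :
  lsum (map (fun i => (i, j)) (seq 0 m)) h = rsum m (fun i => h (i, j)).
Proof.
  induction m as [|m IH]; [reflexivity|].
  rewrite seq_S, map_app, lsum_app, IH. simpl. lra.
Qed.

Definition dsum (n : nat) (f : nat -> nat -> R) : R :=
  rsum n (fun i => rsum n (fun j => f i j)).

Section DoubleSums.
Variable n : nat.
Implicit Types f g : nat -> nat -> R.

Lemma dsum_ext f g :
  (forall i j, (i < n)%nat -> (j < n)%nat -> f i j = g i j) -> dsum n f = dsum n g.
Proof. intros Hfg. apply rsum_ext; intros. apply rsum_ext; auto. Qed.

Lemma dsum_le f g :
  (forall i j, (i < n)%nat -> (j < n)%nat -> f i j <= g i j) -> dsum n f <= dsum n g.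
Proof. intros Hfg. apply rsum_le; intros. apply rsum_le; auto. Qed.

Lemma dsum_plus f g : dsum n (fun i j => f i j + g i j) = dsum n f + dsum n g.
Proof. unfold dsum. rewrite <- rsum_plus. apply rsum_ext; intros. apply rsum_plus. Qed.

Lemma dsum_scal c f : dsum n (fun i j => c * f i j) = c * dsum n f.
Proof. unfold dsum. rewrite <- rsum_scal. apply rsum_ext; intros. apply rsum_scal. Qed.

Lemma dsum_const c : dsum n (fun _ _ => c) = INR n * INR n * c.
Proof.
  unfold dsum. rewrite (rsum_ext _ _ (fun _ => INR n * c)) by (intros; apply rsum_const).
  rewrite rsum_const. ring.
Qed.

Lemma dsum_nonneg f : (forall i j, (i < n)%nat -> (j < n)%nat -> 0 <= f i j) -> 0 <= dsum n f.
Proof. intros Hf. apply rsum_nonneg; intros. apply rsum_nonneg; auto. Qed.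

End DoubleSums.

(** * Summing over symmetric adjacency matrices *)

Lemma upper_pairs_S n :
  upper_pairs (S n) = upper_pairs n ++ map (fun i => (i, n)) (seq 0 (S n)).
Proof.
  unfold upper_pairs. rewrite (seq_S n 0) at 1. rewrite flat_map_app. cbn [flat_map].
  rewrite app_nil_r. reflexivity.
Qed.

Lemma in_upper_pairs n p : In p (upper_pairs n) -> (fst p <= snd p /\ snd p < n)%nat.
Proof.
  induction n as [|n IH]; intros Hp; [contradiction|].
  rewrite upper_pairs_S in Hp. apply in_app_or in Hp as [Hp | Hp].
  - apply IH in Hp; lia.
  - apply in_map_iff in Hp as [i [<- Hi]]. apply in_seq in Hi. simpl; lia.
Qed.

Lemma NoDup_upper_pairs n : NoDup (upper_pairs n).
Proof.
  induction n as [|n IH]; [constructor|]. rewrite upper_pairs_S. apply NoDup_app; auto.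
  - apply NoDup_map_NoDup_ForallPairs; [|apply seq_NoDup].
    intros x y _ _ E; injection E; auto.
  - intros p H1 H2. apply in_upper_pairs in H1. apply in_map_iff in H2 as [i [<- _]].
    simpl in H1; lia.
Qed.

Definition pair_total (M : nat -> nat -> R) (p : nat * nat) : R :=
  if Nat.eqb (fst p) (snd p) then M (fst p) (fst p)
  else M (fst p) (snd p) + M (snd p) (fst p).

Lemma dsum_upper_pairs n M : dsum n M = lsum (upper_pairs n) (pair_total M).
Proof.
  induction n as [|n IH]; [reflexivity|].
  rewrite upper_pairs_S, lsum_app, lsum_map_pair_seq, <- IH.
  unfold dsum; simpl rsum. rewrite rsum_plus.
  unfold pair_total at 2; simpl. rewrite Nat.eqb_refl.
  rewrite (rsum_ext n (fun i => pair_total M (i, n)) (fun i => M i n + M n i)).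
  2:{ intros i Hi. unfold pair_total; simpl. destruct (Nat.eqb_spec i n); [lia | reflexivity]. }
  rewrite rsum_plus. change (rsum n (M n)) with (rsum n (fun j => M n j)). lra.
Qed.

Fixpoint sym_distinct (l : list (nat * nat)) : Prop :=
  match l with
  | [] => True
  | (i, j) :: t => (forall p, In p t -> p <> (i, j) /\ p <> (j, i)) /\ sym_distinct t
  end.

Lemma sym_distinct_of_NoDup l :
  NoDup l -> (forall p, In p l -> (fst p <= snd p)%nat) -> sym_distinct l.
Proof.
  induction l as [|[i j] t IH]; intros Hnd Hle; simpl; auto.
  inversion Hnd as [|? ? Hnin Hnd']; subst. split.
  - intros [a b] Hin. split; intros E; injection E as -> ->; [contradiction|].
    pose proof (Hle (j, i) (or_intror Hin)). pose proof (Hle (i, j) (or_introl eq_refl)).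
    simpl in *. assert (i = j) by lia. subst. contradiction.
  - apply IH; auto. intros; apply Hle; right; auto.
Qed.

Lemma sym_distinct_upper_pairs n : sym_distinct (upper_pairs n).
Proof.
  apply sym_distinct_of_NoDup; [apply NoDup_upper_pairs |].
  intros p Hp; apply (in_upper_pairs n); auto.
Qed.

Definition adj_sym (A : nat -> nat -> bool) : Prop := forall i j, A i j = A j i.

Lemma setsym_sym A i j b : adj_sym A -> adj_sym (setsym A i j b).
Proof.
  unfold adj_sym, setsym; intros HA x y.
  destruct (Nat.eqb_spec x i), (Nat.eqb_spec y j), (Nat.eqb_spec x j), (Nat.eqb_spec y i);
    simpl; auto.
Qed.

Section AdjacencySums.
Implicit Types (l : list (nat * nat)) (F G : (nat -> nat -> bool) -> R).

Lemma sum_adj_le l F G : (forall A, adj_sym A -> F A <= G A) -> sum_adj l F <= sum_adj l G.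
Proof.
  revert F G; induction l as [|[i j] t IH]; intros F G HFG; simpl.
  - apply HFG. intros x y; reflexivity.
  - apply IH. intros A HA.
    pose proof (HFG _ (setsym_sym A i j true HA)).
    pose proof (HFG _ (setsym_sym A i j false HA)). lra.
Qed.

Lemma sum_adj_ext l F G : (forall A, adj_sym A -> F A = G A) -> sum_adj l F = sum_adj l G.
Proof. intros HFG. apply Rle_antisym; apply sum_adj_le; intros A HA; rewrite HFG; auto; lra. Qed.

Lemma sum_adj_plus l F G : sum_adj l (fun A => F A + G A) = sum_adj l F + sum_adj l G.
Proof.
  revert F G; induction l as [|[i j] t IH]; intros F G; simpl; auto.
  rewrite <- IH. apply sum_adj_ext; intros; lra.
Qed.

Lemma sum_adj_scal l c F : sum_adj l (fun A => c * F A) = c * sum_adj l F.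
Proof.
  revert F; induction l as [|[i j] t IH]; intros F; simpl; auto.
  rewrite <- IH. apply sum_adj_ext; intros; lra.
Qed.

Lemma sum_adj_zero l : sum_adj l (fun _ => 0) = 0.
Proof.
  rewrite (sum_adj_ext l _ (fun _ => 0 * 0)) by (intros; lra).
  rewrite sum_adj_scal; lra.
Qed.

Lemma sum_adj_lsum {X : Type} (xs : list X) l (F : X -> (nat -> nat -> bool) -> R) :
  sum_adj l (fun A => lsum xs (fun x => F x A)) = lsum xs (fun x => sum_adj l (F x)).
Proof.
  induction xs as [|x xs IH]; simpl; [apply sum_adj_zero|].
  rewrite sum_adj_plus, IH; reflexivity.
Qed.

Lemma sum_adj_rsum m l (F : nat -> (nat -> nat -> bool) -> R) :
  sum_adj l (fun A => rsum m (fun x => F x A)) = rsum m (fun x => sum_adj l (F x)).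
Proof.
  induction m as [|m IH]; simpl; [apply sum_adj_zero|].
  rewrite sum_adj_plus, IH; reflexivity.
Qed.

(* This is where the independence of the entries [A i j], [i <= j], enters. *)
Lemma sum_adj_lprod l (phi : nat * nat -> bool -> R) : sym_distinct l ->
  sum_adj l (fun A => lprod l (fun p => phi p (A (fst p) (snd p)))) =
  lprod l (fun p => phi p true + phi p false).
Proof.
  induction l as [|[i j] t IH]; intros Hl; simpl; [lra|].
  destruct Hl as [Hfresh Hl]. rewrite <- IH, <- sum_adj_scal by auto.
  apply sum_adj_ext. intros A _. simpl.
  assert (Hunset : forall b, lprod t (fun p => phi p (setsym A i j b (fst p) (snd p)))
                             = lprod t (fun p => phi p (A (fst p) (snd p)))).
  { intros b. apply lprod_ext. intros [a c] Hin. destruct (Hfresh _ Hin) as [h1 h2].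
    unfold setsym; simpl.
    destruct (Nat.eqb_spec a i), (Nat.eqb_spec c j), (Nat.eqb_spec a j), (Nat.eqb_spec c i);
      subst; simpl; auto; congruence. }
  rewrite !Hunset. unfold setsym. rewrite !Nat.eqb_refl. simpl. lra.
Qed.

End AdjacencySums.

Definition entries_in_01 (n : nat) (P : nat -> nat -> R) : Prop :=
  forall i j, (i < n)%nat -> (j < n)%nat -> 0 <= P i j <= 1.

Definition sym_on (n : nat) (P : nat -> nat -> R) : Prop :=
  forall i j, (i < n)%nat -> (j < n)%nat -> P i j = P j i.

Lemma in_NBM_entries_in_01 n K L P : in_NBM n K L P -> entries_in_01 n P.
Proof. intros (z & c & B & H & _ & _ & _ & _ & _ & HP & _). exact HP. Qed.

Definition pair_weight (P : nat -> nat -> R) (p : nat * nat) (b : bool) : R :=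
  if b then P (fst p) (snd p) else 1 - P (fst p) (snd p).

Lemma adj_weight_lprod n P A :
  adj_weight n P A = lprod (upper_pairs n) (fun p => pair_weight P p (A (fst p) (snd p))).
Proof.
  unfold adj_weight, rprod.
  induction (upper_pairs n) as [|p l IH]; simpl; [|rewrite IH]; reflexivity.
Qed.

Lemma adj_weight_nonneg n P A : entries_in_01 n P -> 0 <= adj_weight n P A.
Proof.
  intros HP. rewrite adj_weight_lprod. apply lprod_nonneg. intros [i j] Hin.
  apply in_upper_pairs in Hin. simpl in Hin. unfold pair_weight; simpl.
  destruct (HP i j) as [h1 h2]; try lia. destruct (A i j); lra.
Qed.

Section Expectation.
Variables (n : nat) (P : nat -> nat -> R).
Implicit Types X Y : (nat -> nat -> bool) -> R.

Lemma Expect_le X Y : entries_in_01 n P -> (forall A, adj_sym A -> X A <= Y A) ->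
  Expect n P X <= Expect n P Y.
Proof.
  intros HP HXY. apply sum_adj_le. intros A HA.
  apply Rmult_le_compat_l; auto. apply adj_weight_nonneg; auto.
Qed.

Lemma Expect_plus X Y : Expect n P (fun A => X A + Y A) = Expect n P X + Expect n P Y.
Proof. unfold Expect. rewrite <- sum_adj_plus. apply sum_adj_ext; intros; ring. Qed.

Lemma Expect_scal c X : Expect n P (fun A => c * X A) = c * Expect n P X.
Proof. unfold Expect. rewrite <- sum_adj_scal. apply sum_adj_ext; intros; ring. Qed.

Lemma Expect_const c : Expect n P (fun _ => c) = c.
Proof.
  unfold Expect.
  rewrite (sum_adj_ext _ _ (fun A => c * lprod (upper_pairs n)
             (fun p => pair_weight P p (A (fst p) (snd p)))))
    by (intros; rewrite adj_weight_lprod; ring).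
  rewrite sum_adj_scal, sum_adj_lprod by apply sym_distinct_upper_pairs.
  rewrite (lprod_ext _ _ (fun _ => 1)), lprod_one by (intros; unfold pair_weight; simpl; ring).
  ring.
Qed.

Lemma Expect_lsum {Z : Type} (zs : list Z) (F : Z -> (nat -> nat -> bool) -> R) :
  Expect n P (fun A => lsum zs (fun z => F z A)) = lsum zs (fun z => Expect n P (F z)).
Proof.
  unfold Expect. rewrite <- sum_adj_lsum. apply sum_adj_ext. intros.
  rewrite <- lsum_scal. reflexivity.
Qed.

Lemma Expect_rsum m (F : nat -> (nat -> nat -> bool) -> R) :
  Expect n P (fun A => rsum m (fun x => F x A)) = rsum m (fun x => Expect n P (F x)).
Proof.
  unfold Expect. rewrite <- sum_adj_rsum. apply sum_adj_ext. intros.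
  rewrite <- rsum_scal. reflexivity.
Qed.

End Expectation.

(** * A Chernoff bound for the noise *)

Lemma exp_le_quadratic x : x <= 1/2 -> exp x <= 1 + x + 2 * x ^ 2.
Proof.
  intros Hx. pose proof (exp_ineq1_le (- x)) as Hneg. rewrite exp_Ropp in Hneg.
  pose proof (exp_pos x).
  assert (exp x * (1 - x) <= 1).
  { apply Rmult_le_reg_r with (/ exp x); [apply Rinv_0_lt_compat; auto|].
    replace (exp x * (1 - x) * / exp x) with (1 - x) by (field; lra). lra. }
  assert (0 <= x ^ 2 * (1 - 2 * x)) by (apply Rmult_le_pos; nra).
  nra.
Qed.

Lemma bernoulli_mgf_le p y : 0 <= p <= 1 -> -(1/2) <= y <= 1/2 ->
  p * exp (y * (1 - p)) + (1 - p) * exp (y * (0 - p)) <= exp (2 * y ^ 2).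
Proof.
  intros Hp Hy.
  pose proof (exp_le_quadratic (y * (1 - p)) ltac:(nra)).
  pose proof (exp_le_quadratic (y * (0 - p)) ltac:(nra)).
  pose proof (exp_ineq1_le (2 * y ^ 2)).
  assert (p * exp (y * (1 - p)) <= p * (1 + y * (1 - p) + 2 * (y * (1 - p)) ^ 2))
    by (apply Rmult_le_compat_l; lra).
  assert ((1 - p) * exp (y * (0 - p)) <= (1 - p) * (1 + y * (0 - p) + 2 * (y * (0 - p)) ^ 2))
    by (apply Rmult_le_compat_l; lra).
  assert (0 <= y ^ 2 * (p * (1 - p))) by (apply Rmult_le_pos; nra).
  nra.
Qed.

Definition noise_dot (n : nat) (P : nat -> nat -> R) (A : nat -> nat -> bool)
  (D : nat -> nat -> R) : R :=
  dsum n (fun i j => (adjR A i j - P i j) * D i j).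

Definition tail_ind (n : nat) (P D : nat -> nat -> R) (t : R) (A : nat -> nat -> bool) : R :=
  if Rle_dec (noise_dot n P A D) t then 0 else 1.

Lemma tail_ind_01 n P D t A : 0 <= tail_ind n P D t A <= 1.
Proof. unfold tail_ind; destruct (Rle_dec _ _); lra. Qed.

Lemma tail_ind_gt n P D t A : ~ noise_dot n P A D <= t -> tail_ind n P D t A = 1.
Proof. intros Hgt. unfold tail_ind. destruct (Rle_dec _ _); [contradiction | reflexivity]. Qed.

Lemma noise_dot_upper_pairs n P A D : adj_sym A -> sym_on n P ->
  noise_dot n P A D =
  lsum (upper_pairs n) (fun p => (adjR A (fst p) (snd p) - P (fst p) (snd p)) * pair_total D p).
Proof.
  intros HA HP. unfold noise_dot. rewrite dsum_upper_pairs. apply lsum_ext.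
  intros [i j] Hin. apply in_upper_pairs in Hin. simpl in Hin. unfold pair_total; simpl.
  destruct (Nat.eqb_spec i j); [subst; reflexivity|].
  unfold adjR. rewrite (HA j i), (HP j i) by lia. ring.
Qed.

Section Chernoff.
Variables (n : nat) (P D : nat -> nat -> R) (lam : R).
Hypotheses (HP : entries_in_01 n P) (HPsym : sym_on n P) (Hlam : 0 < lam <= 1/4)
  (HD : forall i j, (i < n)%nat -> (j < n)%nat -> -1 <= D i j <= 1).

Lemma Expect_exp_noise_dot_le :
  Expect n P (fun A => exp (lam * noise_dot n P A D))
  <= exp (4 * lam ^ 2 * dsum n (fun i j => D i j ^ 2)).
Proof.
  unfold Expect.
  rewrite (sum_adj_ext _ _ (fun A => lprod (upper_pairs n) (fun p =>
     pair_weight P p (A (fst p) (snd p)) *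
     exp (lam * ((b2R (A (fst p) (snd p)) - P (fst p) (snd p)) * pair_total D p))))).
  2:{ intros A HA. rewrite noise_dot_upper_pairs by auto.
      rewrite <- lsum_scal, exp_lsum, adj_weight_lprod, lprod_mult. reflexivity. }
  rewrite (sum_adj_lprod _ (fun p b => pair_weight P p b *
     exp (lam * ((b2R b - P (fst p) (snd p)) * pair_total D p)))) by apply sym_distinct_upper_pairs.
  apply Rle_trans with (lprod (upper_pairs n) (fun p => exp (2 * (lam * pair_total D p) ^ 2))).
  - apply lprod_le. intros [i j] Hin. apply in_upper_pairs in Hin. simpl in Hin.
    destruct (HP i j) as [hp1 hp2]; try lia.
    assert (-(1/2) <= lam * pair_total D (i, j) <= 1/2).
    { unfold pair_total; simpl. destruct (Nat.eqb_spec i j) as [-> | _].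
      - destruct (HD j j); try lia. nra.
      - destruct (HD i j); try lia. destruct (HD j i); try lia. nra. }
    unfold pair_weight, b2R; simpl. split.
    + apply Rplus_le_le_0_compat; apply Rmult_le_pos; try lra; left; apply exp_pos.
    + replace (lam * ((1 - P i j) * pair_total D (i, j)))
        with (lam * pair_total D (i, j) * (1 - P i j)) by ring.
      replace (lam * ((0 - P i j) * pair_total D (i, j)))
        with (lam * pair_total D (i, j) * (0 - P i j)) by ring.
      apply bernoulli_mgf_le; auto.
  - rewrite <- exp_lsum. apply exp_le.
    rewrite (dsum_upper_pairs n (fun i j => D i j ^ 2)), <- lsum_scal.
    apply lsum_le. intros [i j] _. unfold pair_total; simpl.
    assert (0 <= lam ^ 2 * (D i j - D j i) ^ 2) by (apply Rmult_le_pos; apply pow2_ge_0).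
    assert (0 <= lam ^ 2 * D i i ^ 2) by (apply Rmult_le_pos; apply pow2_ge_0).
    destruct (Nat.eqb i j); nra.
Qed.

Lemma Expect_tail_ind_le t :
  Expect n P (tail_ind n P D t) <= exp (- lam * t + 4 * lam ^ 2 * dsum n (fun i j => D i j ^ 2)).
Proof.
  apply Rle_trans with (Expect n P (fun A => exp (- lam * t) * exp (lam * noise_dot n P A D))).
  - apply Expect_le; auto. intros A _. unfold tail_ind. rewrite <- exp_plus.
    destruct (Rle_dec (noise_dot n P A D) t); [left; apply exp_pos|].
    rewrite <- exp_0. apply exp_le. nra.
  - rewrite Expect_scal, exp_plus. apply Rmult_le_compat_l; [left; apply exp_pos|].
    apply Expect_exp_noise_dot_le.
Qed.

End Chernoff.

Lemma frob2_dsum n P Q : frob2 n P Q = dsum n (fun i j => (P i j - Q i j) ^ 2).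
Proof. reflexivity. Qed.

(* With [lam = 1/48] the variance term [4 lam^2 |D|^2] is exactly cancelled by the
   part [|D|^2 / 12] of the threshold. *)
Lemma Expect_tail_ind_diff_le n P Q S s :
  entries_in_01 n P -> sym_on n P -> entries_in_01 n Q -> entries_in_01 n S ->
  Expect n P (tail_ind n P (fun i j => Q i j - S i j) (frob2 n Q S / 12 + s)) <= exp (- (s / 48)).
Proof.
  intros HP HPsym HQ HS.
  eapply Rle_trans; [apply (Expect_tail_ind_le n P (fun i j => Q i j - S i j) (1/48)); auto; try lra|].
  - intros i j Hi Hj. destruct (HQ i j Hi Hj), (HS i j Hi Hj). lra.
  - apply exp_le. rewrite frob2_dsum. lra.
Qed.

(** * A finite net of the nested block model *)

Fixpoint all_funs {T : Type} (m : nat) (vals : list T) (d : T) : list (nat -> T) :=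
  match m with
  | O => [fun _ => d]
  | S m' => flat_map (fun f => map (fun v => fun i => if Nat.eqb i m' then v else f i) vals)
                     (all_funs m' vals d)
  end.

Lemma length_all_funs {T : Type} m (vals : list T) d :
  length (all_funs m vals d) = (length vals ^ m)%nat.
Proof.
  induction m as [|m IH]; simpl; [reflexivity|].
  rewrite (flat_map_constant_length (c := length vals)) by (intros; apply length_map).
  rewrite IH. lia.
Qed.

Lemma all_funs_cover {T : Type} m (vals : list T) d g :
  (forall i, (i < m)%nat -> In (g i) vals) ->
  exists f, In f (all_funs m vals d) /\ forall i, (i < m)%nat -> f i = g i.
Proof.
  induction m as [|m IH]; intros Hg.
  - exists (fun _ => d). split; [left; reflexivity | intros; lia].
  - destruct IH as [f [Hf Hfg]]; [intros; apply Hg; lia|].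
    exists (fun i => if Nat.eqb i m then g m else f i). split.
    + simpl. apply in_flat_map. exists f. split; auto.
      apply in_map_iff. exists (g m). split; [reflexivity | apply Hg; lia].
    + intros i Hi. destruct (Nat.eqb_spec i m) as [-> | Him]; [reflexivity|]. apply Hfg; lia.
Qed.

Lemma floor_ex y : 0 <= y -> exists k : nat, INR k <= y < INR k + 1.
Proof.
  intros Hy. destruct (INR_unbounded y) as [N HN]. induction N as [|N IH]; [simpl in HN; lra|].
  destruct (Rlt_or_le y (INR N)) as [h | h]; auto.
  exists N. rewrite S_INR in HN. lra.
Qed.

Definition grid (M G : nat) : list R := map (fun k => INR k / INR G) (seq 0 (S (M * G))).

Lemma grid_round_down (M G : nat) x : (0 < G)%nat -> 0 <= x <= INR M ->
  exists v, In v (grid M G) /\ 0 <= v <= x /\ x - v <= / INR G.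
Proof.
  intros HG Hx. assert (HG' : 0 < INR G) by (apply lt_0_INR; auto).
  destruct (floor_ex (x * INR G)) as [k [h1 h2]]; [apply Rmult_le_pos; lra|].
  exists (INR k / INR G). split; [|split].
  - apply in_map_iff. exists k. split; [reflexivity|]. apply in_seq.
    assert (INR k <= INR (M * G)).
    { rewrite mult_INR. apply Rle_trans with (x * INR G); auto. apply Rmult_le_compat_r; lra. }
    apply INR_le in H. lia.
  - split; [apply Rmult_le_pos; [apply pos_INR | left; apply Rinv_0_lt_compat; auto]|].
    apply Rmult_le_reg_r with (INR G); auto.
    replace (INR k / INR G * INR G) with (INR k) by (field; lra). lra.
  - apply Rmult_le_reg_r with (INR G); auto.
    replace ((x - INR k / INR G) * INR G) with (x * INR G - INR k) by (field; lra).
    replace (/ INR G * INR G) with 1 by (field; lra). lra.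
Qed.

Lemma grid_matrix_round_down (m1 m2 M G : nat) (X : nat -> nat -> R) : (0 < G)%nat ->
  (forall a b, (a < m1)%nat -> (b < m2)%nat -> 0 <= X a b <= INR M) ->
  exists Y, In Y (all_funs m1 (all_funs m2 (grid M G) 0) (fun _ => 0)) /\
    forall a b, (a < m1)%nat -> (b < m2)%nat -> 0 <= Y a b <= X a b /\ X a b - Y a b <= / INR G.
Proof.
  intros HG HX.
  assert (Hrows : forall a, exists f, (a < m1)%nat -> In f (all_funs m2 (grid M G) 0) /\
      forall b, (b < m2)%nat -> 0 <= f b <= X a b /\ X a b - f b <= / INR G).
  { intros a. destruct (Compare_dec.lt_dec a m1) as [Ha | Ha]; [|exists (fun _ => 0); intros; lia].
    assert (Hentries : forall b, exists v, (b < m2)%nat ->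
              In v (grid M G) /\ 0 <= v <= X a b /\ X a b - v <= / INR G).
    { intros b. destruct (Compare_dec.lt_dec b m2) as [Hb | Hb]; [|exists 0; intros; lia].
      destruct (grid_round_down M G (X a b) HG (HX a b Ha Hb)) as [v Hv]. exists v; auto. }
    apply functional_choice in Hentries as [g Hg].
    destruct (all_funs_cover m2 (grid M G) 0 g) as [f [Hf Hfg]]; [intros b Hb; apply Hg; auto|].
    exists f. intros _. split; auto. intros b Hb. rewrite Hfg by auto. apply Hg; auto. }
  apply functional_choice in Hrows as [rows Hrows].
  destruct (all_funs_cover m1 (all_funs m2 (grid M G) 0) (fun _ => 0) rows)
    as [Y [HY HYrows]]; [intros a Ha; apply Hrows; auto|].
  exists Y. split; auto. intros a b Ha Hb. rewrite HYrows by auto. apply Hrows; auto.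
Qed.

Definition nbm_matrix (z c : nat -> nat) (B H : nat -> nat -> R) : nat -> nat -> R :=
  fun i j => B (z i) (z j) * H i (c (z j)) * H j (c (z i)).

(* The mass constraint on [H] forces [H i l <= n], so [H] is rounded on the grid of [[0, n]]. *)
Definition nbm_net (n G K L : nat) : list (nat -> nat -> R) :=
  flat_map (fun z => flat_map (fun c => flat_map (fun B =>
     map (fun H => nbm_matrix z c B H) (all_funs n (all_funs L (grid n G) 0) (fun _ => 0)))
     (all_funs K (all_funs K (grid 1 G) 0) (fun _ => 0)))
     (all_funs K (seq 0 L) 0%nat))
  (all_funs n (seq 0 K) 0%nat).

Lemma length_nbm_net n G K L : length (nbm_net n G K L) =
  (K ^ n * (L ^ K * ((S G) ^ K) ^ K * ((S (n * G)) ^ L) ^ n))%nat.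
Proof.
  unfold nbm_net. assert (Hgrid : forall M, length (grid M G) = S (M * G))
    by (intros; unfold grid; rewrite length_map, length_seq; reflexivity).
  rewrite (flat_map_constant_length (c := (L ^ K * ((S G) ^ K) ^ K * ((S (n * G)) ^ L) ^ n)%nat)).
  { rewrite length_all_funs, length_seq; reflexivity. }
  intros z _. rewrite (flat_map_constant_length (c := (((S G) ^ K) ^ K * ((S (n * G)) ^ L) ^ n)%nat)).
  { rewrite length_all_funs, length_seq; lia. }
  intros c _. rewrite (flat_map_constant_length (c := (((S (n * G)) ^ L) ^ n)%nat)).
  { rewrite !length_all_funs, Hgrid, Nat.mul_1_l; reflexivity. }
  intros B _. rewrite length_map, !length_all_funs, Hgrid. reflexivity.
Qed.

Lemma NBM_rep_H_le n K L P z c B H : NBM_rep n K L P z c B H ->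
  forall i l, (i < n)%nat -> (l < L)%nat -> 0 <= H i l <= INR n.
Proof.
  intros (hz & hc & hB & hH & hmass & _) i l Hi Hl. split; [apply hH; auto|].
  set (f := fun i0 => if Nat.eqb (z i0) (z i) then H i0 l else 0).
  assert (Hf : forall j, (j < n)%nat -> 0 <= f j)
    by (intros j Hj; unfold f; destruct (Nat.eqb _ _); [apply hH; auto | lra]).
  apply Rle_trans with (rsum n f).
  - pose proof (rsum_ge_term n f i Hf Hi) as Hi'. unfold f in Hi'.
    rewrite Nat.eqb_refl in Hi'. exact Hi'.
  - unfold f. rewrite (hmass (z i) l (hz i Hi) Hl), <- (Rmult_1_r (INR n)), <- rsum_const.
    apply rsum_le. intros; destruct (Nat.eqb _ _); lra.
Qed.

Lemma product_round_down b h1 h2 b' h1' h2' N d :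
  0 <= b <= 1 -> 0 <= h1 <= N -> 0 <= h2 <= N -> 0 <= b' <= b -> 0 <= h1' <= h1 -> 0 <= h2' <= h2 ->
  b - b' <= d -> h1 - h1' <= d -> h2 - h2' <= d ->
  0 <= b' * h1' * h2' <= b * h1 * h2 /\ b * h1 * h2 - b' * h1' * h2' <= d * (N * N + 2 * N).
Proof.
  intros. split.
  - split; [apply Rmult_le_pos; [apply Rmult_le_pos|]; lra|].
    apply Rmult_le_compat; try lra; [apply Rmult_le_pos; lra | apply Rmult_le_compat; lra].
  - replace (b * h1 * h2 - b' * h1' * h2')
      with ((b - b') * (h1 * h2) + b' * (h1 - h1') * h2 + b' * h1' * (h2 - h2')) by ring.
    assert ((b - b') * (h1 * h2) <= d * (N * N)) by (apply Rmult_le_compat; nra).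
    assert (b' * (h1 - h1') * h2 <= 1 * d * N) by (apply Rmult_le_compat; nra).
    assert (b' * h1' * (h2 - h2') <= 1 * N * d) by (apply Rmult_le_compat; nra).
    lra.
Qed.

Lemma nbm_net_cover n G K L P : (0 < G)%nat -> in_NBM n K L P ->
  exists q, In q (nbm_net n G K L) /\ forall i j, (i < n)%nat -> (j < n)%nat ->
    0 <= q i j <= P i j /\ P i j - q i j <= / INR G * (INR n * INR n + 2 * INR n).
Proof.
  intros HG (z & c & B & H & Hrep).
  pose proof (NBM_rep_H_le _ _ _ _ _ _ _ _ Hrep) as HHn.
  destruct Hrep as (hz & hc & hB & _ & _ & _ & hP).
  destruct (all_funs_cover n (seq 0 K) 0%nat z) as [z' [Hz' Hzz']].
  { intros i Hi. apply in_seq. specialize (hz i Hi). lia. }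
  destruct (all_funs_cover K (seq 0 L) 0%nat c) as [c' [Hc' Hcc']].
  { intros k Hk. apply in_seq. specialize (hc k Hk). lia. }
  destruct (grid_matrix_round_down K K 1 G B HG) as [B' [HB' HBB']].
  { intros a b Ha Hb. simpl. apply hB; auto. }
  destruct (grid_matrix_round_down n L n G H HG) as [H' [HH' HHH']].
  { intros a b Ha Hb. apply HHn; auto. }
  exists (nbm_matrix z' c' B' H'). split.
  - unfold nbm_net. apply in_flat_map. exists z'. split; auto.
    apply in_flat_map. exists c'. split; auto.
    apply in_flat_map. exists B'. split; auto.
    apply in_map_iff. exists H'. split; auto.
  - intros i j Hi Hj. unfold nbm_matrix. rewrite !Hzz', !Hcc', hP by auto.
    pose proof (hz i Hi). pose proof (hz j Hj).
    pose proof (hc (z i) ltac:(auto)). pose proof (hc (z j) ltac:(auto)).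
    destruct (HBB' (z i) (z j)), (HHH' i (c (z j))), (HHH' j (c (z i))); auto.
    apply product_round_down; auto.
Qed.

(** * Counting the net against the penalty *)

Definition pen_C1 : R := 864.
Definition pen_C2 : R := 96.
Definition net_resolution (n : nat) : nat := (3 * n ^ 4)%nat.
Definition net_error (n : nat) : R :=
  / INR (net_resolution n) * (INR n * INR n + 2 * INR n).

Lemma ln_INR_ge_half n : (2 <= n)%nat -> 1/2 <= ln (INR n).
Proof.
  intros Hn. pose proof ln_lt_2. apply Rle_trans with (ln 2); [lra|].
  apply ln_le; [lra|]. replace 2 with (INR 2) by (simpl; ring). apply le_INR; auto.
Qed.

Lemma net_error_bounds n : (2 <= n)%nat -> 0 <= net_error n /\ INR n * INR n * net_error n <= 1.
Proof.
  intros Hn. assert (Hx : 2 <= INR n) by (replace 2 with (INR 2) by (simpl; ring); apply le_INR; auto).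
  assert (Hnn : INR n * INR n * net_error n = (INR n + 2) / (3 * INR n)).
  { unfold net_error, net_resolution. rewrite mult_INR, pow_INR. simpl (INR 3). field. lra. }
  split.
  - unfold net_error. apply Rmult_le_pos; [|nra].
    left. apply Rinv_0_lt_compat, lt_0_INR. unfold net_resolution. pose proof (Nat.pow_nonzero n 4). lia.
  - rewrite Hnn. apply Rmult_le_reg_r with (3 * INR n); [lra|].
    replace ((INR n + 2) / (3 * INR n) * (3 * INR n)) with (INR n + 2) by (field; lra). lra.
Qed.

Lemma Pen_ge n K L : (2 <= n)%nat -> (1 <= L)%nat -> (L <= K)%nat -> (K <= n)%nat ->
  3 * INR n + 3 <= Pen pen_C1 pen_C2 n K L.
Proof.
  intros Hn HL HLK HK. unfold Pen, pen_C1, pen_C2. pose proof (ln_INR_ge_half n Hn).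
  assert (Hx : 2 <= INR n) by (replace 2 with (INR 2) by (simpl; ring); apply le_INR; auto).
  assert (Hk : 1 <= INR K) by (replace 1 with (INR 1) by (simpl; ring); apply le_INR; lia).
  assert (Hl : 1 <= INR L) by (replace 1 with (INR 1) by (simpl; ring); apply le_INR; lia).
  assert (0 <= ln (INR K)) by (rewrite <- ln_1; apply ln_le; lra).
  assert (0 <= INR n * ln (INR K)) by (apply Rmult_le_pos; lra).
  assert (INR n <= INR n * INR L + INR K ^ 2) by nra.
  assert (INR n * (1/2) <= (INR n * INR L + INR K ^ 2) * ln (INR n)) by (apply Rmult_le_compat; nra).
  nra.
Qed.

Lemma length_nbm_net_le n K L : (2 <= n)%nat -> (L <= K)%nat -> (K <= n)%nat ->
  INR (length (nbm_net n (net_resolution n) K L)) <= INR K ^ n * INR n ^ (8 * (n * L + K * K)).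
Proof.
  intros Hn HLK HK. set (x := INR n).
  assert (Hx : 2 <= x) by (unfold x; replace 2 with (INR 2) by (simpl; ring); apply le_INR; auto).
  assert (HLx : INR L <= x) by (apply le_INR; lia).
  assert (HSG : INR (S (net_resolution n)) <= x ^ 6).
  { unfold net_resolution. rewrite S_INR, mult_INR, pow_INR. fold x. simpl (INR 3).
    assert (0 <= x ^ 4 * (x ^ 2 - 4)) by (apply Rmult_le_pos; [apply pow_le; lra | nra]).
    assert (16 <= x ^ 4) by (replace 16 with (2 ^ 4) by ring; apply pow_incr; lra). nra. }
  assert (HSnG : INR (S (n * net_resolution n)) <= x ^ 7).
  { unfold net_resolution. rewrite S_INR, !mult_INR, pow_INR. fold x. simpl (INR 3).
    assert (0 <= x ^ 5 * (x ^ 2 - 4)) by (apply Rmult_le_pos; [apply pow_le; lra | nra]).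
    assert (32 <= x ^ 5) by (replace 32 with (2 ^ 5) by ring; apply pow_incr; lra). nra. }
  pose proof (pos_INR L). pose proof (pos_INR (S (net_resolution n))).
  pose proof (pos_INR (S (n * net_resolution n))).
  rewrite length_nbm_net, !mult_INR, !pow_INR.
  apply Rmult_le_compat_l; [apply pow_le, pos_INR|].
  apply Rle_trans with (x ^ K * ((x ^ 6) ^ K) ^ K * ((x ^ 7) ^ L) ^ n).
  - apply Rmult_le_compat; [apply Rmult_le_pos; apply pow_le; try lra; apply pow_le; lra
                           | apply pow_le; apply pow_le; lra | |].
    + apply Rmult_le_compat; try (apply pow_le; try lra; apply pow_le; lra).
      * apply pow_incr; lra.
      * apply pow_incr; split; [apply pow_le; lra|]. apply pow_incr; lra.
    + apply pow_incr; split; [apply pow_le; lra|]. apply pow_incr; lra.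
  - rewrite <- !pow_mult, <- !pow_add. apply Rle_pow; [lra|]. nia.
Qed.

(* [Pen / 2 / 48] is the Chernoff exponent of the threshold used at each net point. *)
Lemma length_nbm_net_penalty n K L :
  (2 <= n)%nat -> (1 <= L)%nat -> (L <= K)%nat -> (K <= n)%nat ->
  INR (length (nbm_net n (net_resolution n) K L)) * exp (- (Pen pen_C1 pen_C2 n K L / 2 / 48))
  <= exp (- (INR n / 32)).
Proof.
  intros Hn HL HLK HK. set (x := INR n). set (k := INR K). set (l := INR L).
  assert (Hx : 2 <= x) by (unfold x; replace 2 with (INR 2) by (simpl; ring); apply le_INR; auto).
  assert (Hk : 1 <= k) by (unfold k; replace 1 with (INR 1) by (simpl; ring); apply le_INR; lia).
  assert (Hl : 1 <= l) by (unfold l; replace 1 with (INR 1) by (simpl; ring); apply le_INR; lia).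
  pose proof (ln_INR_ge_half n Hn) as Hln. fold x in Hln.
  pose proof (length_nbm_net_le n K L Hn HLK HK) as Hlen.
  rewrite (pow_exp_ln x), (pow_exp_ln k), <- exp_plus in Hlen by lra.
  eapply Rle_trans; [apply Rmult_le_compat_r; [left; apply exp_pos | exact Hlen]|].
  rewrite <- exp_plus. apply exp_le.
  unfold Pen, pen_C1, pen_C2. rewrite mult_INR, plus_INR, !mult_INR. fold x k l. simpl (INR 8).
  assert (x <= x * l + k ^ 2) by nra.
  assert (x * (1/2) <= (x * l + k ^ 2) * ln x) by (apply Rmult_le_compat; nra).
  replace (k * k) with (k ^ 2) by ring. nra.
Qed.

(** * The oracle inequality *)

Lemma frob2_nonneg n P Q : 0 <= frob2 n P Q.
Proof. apply dsum_nonneg. intros; apply pow2_ge_0. Qed.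

Lemma frob2_comm n P Q : frob2 n P Q = frob2 n Q P.
Proof. apply dsum_ext. intros; ring. Qed.

Lemma frob2_le_sq n P Q : entries_in_01 n P -> entries_in_01 n Q -> frob2 n P Q <= INR n * INR n.
Proof.
  intros HP HQ. rewrite <- (Rmult_1_r (INR n * INR n)), <- dsum_const. apply dsum_le.
  intros i j Hi Hj. destruct (HP i j Hi Hj), (HQ i j Hi Hj). nra.
Qed.

Lemma frob2_adjR_expand n A Q P :
  frob2 n (adjR A) Q =
  frob2 n (adjR A) P - 2 * noise_dot n P A (fun i j => Q i j - P i j) + frob2 n Q P.
Proof.
  unfold noise_dot. rewrite !frob2_dsum, <- dsum_scal.
  transitivity (dsum n (fun i j => ((adjR A i j - P i j) ^ 2
      + (-1) * (2 * ((adjR A i j - P i j) * (Q i j - P i j)))) + (Q i j - P i j) ^ 2)).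
  - apply dsum_ext. intros; ring.
  - rewrite !dsum_plus, dsum_scal. ring.
Qed.

Lemma adjR_01 A i j : 0 <= adjR A i j <= 1.
Proof. unfold adjR, b2R; destruct (A i j); lra. Qed.

(* The basic inequality: optimality of [Ph] against [P], with the noise term at [Ph]
   replaced by the one at the nearby point [q]. *)
Lemma oracle_ineq_of_noise_bounds n A (Pst P Ph q : nat -> nat -> R) (e s pen penh : R) :
  entries_in_01 n Pst -> entries_in_01 n Ph ->
  (forall i j, (i < n)%nat -> (j < n)%nat -> 0 <= q i j <= Ph i j /\ Ph i j - q i j <= e) ->
  0 <= e -> INR n * INR n * e <= 1 ->
  frob2 n (adjR A) Ph + penh <= frob2 n (adjR A) P + pen ->
  noise_dot n Pst A (fun i j => Pst i j - P i j) <= frob2 n Pst P / 12 + s ->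
  noise_dot n Pst A (fun i j => q i j - Pst i j) <= frob2 n q Pst / 12 + penh / 2 ->
  2 * s + 3 <= pen ->
  frob2 n Ph Pst <= 3 * (frob2 n P Pst + pen).
Proof.
  intros HPst HPh Hq He Hne Hopt HnoiseP Hnoiseq Hpen.
  rewrite (frob2_adjR_expand n A Ph Pst), (frob2_adjR_expand n A P Pst) in Hopt.
  assert (Hnoise_near : noise_dot n Pst A (fun i j => Ph i j - Pst i j)
                        <= noise_dot n Pst A (fun i j => q i j - Pst i j) + 1).
  { apply Rle_trans with (dsum n (fun i j => (adjR A i j - Pst i j) * (q i j - Pst i j) + e)).
    - apply dsum_le. intros i j Hi Hj. destruct (Hq i j Hi Hj) as [[h1 h2] h3].
      destruct (HPst i j Hi Hj). pose proof (adjR_01 A i j).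
      assert ((adjR A i j - Pst i j) * (Ph i j - q i j) <= e).
      { destruct (Rle_dec 0 (adjR A i j - Pst i j)).
        - replace e with (1 * e) by ring. apply Rmult_le_compat; lra.
        - nra. }
      nra.
    - rewrite dsum_plus, dsum_const. unfold noise_dot. lra. }
  assert (Hfrob_near : frob2 n q Pst <= 2 * frob2 n Ph Pst + 2).
  { rewrite frob2_dsum.
    apply Rle_trans with (dsum n (fun i j => 2 * (Ph i j - Pst i j) ^ 2 + 2 * e)).
    - apply dsum_le. intros i j Hi Hj. destruct (Hq i j Hi Hj) as [[h1 h2] h3].
      destruct (HPh i j Hi Hj).
      assert ((Ph i j - q i j) ^ 2 <= e) by nra.
      pose proof (pow2_ge_0 ((Ph i j - Pst i j) + (Ph i j - q i j))). nra.
    - rewrite dsum_plus, dsum_scal, dsum_const, frob2_dsum. lra. }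
  assert (Hnoise_opp : noise_dot n Pst A (fun i j => P i j - Pst i j)
                       = - noise_dot n Pst A (fun i j => Pst i j - P i j)).
  { unfold noise_dot.
    replace (- dsum n (fun i j => (adjR A i j - Pst i j) * (Pst i j - P i j)))
      with (-1 * dsum n (fun i j => (adjR A i j - Pst i j) * (Pst i j - P i j))) by ring.
    rewrite <- dsum_scal. apply dsum_ext. intros; ring. }
  rewrite frob2_comm in HnoiseP. pose proof (frob2_nonneg n P Pst). lra.
Qed.

(* Net points can have entries above 1: clipping keeps [clip q - Pst] in [[-1, 1]], as the
   Chernoff bound needs, and does not move the points approximating an element of the model. *)
Definition clip (q : nat -> nat -> R) : nat -> nat -> R := fun i j => Rmin 1 (Rmax 0 (q i j)).

Lemma clip_01 n q : entries_in_01 n (clip q).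
Proof.
  intros i j _ _. unfold clip, Rmin, Rmax.
  destruct (Rle_dec 0 (q i j)); destruct (Rle_dec 1 _); lra.
Qed.

Lemma clip_id q i j : 0 <= q i j <= 1 -> clip q i j = q i j.
Proof.
  intros Hq. unfold clip, Rmin, Rmax.
  destruct (Rle_dec 0 (q i j)); [|lra]. destruct (Rle_dec 1 (q i j)); lra.
Qed.

Definition net_tail (n : nat) (Pst : nat -> nat -> R) (K L : nat) (A : nat -> nat -> bool) : R :=
  lsum (nbm_net n (net_resolution n) K L) (fun q =>
    tail_ind n Pst (fun i j => clip q i j - Pst i j)
      (frob2 n (clip q) Pst / 12 + Pen pen_C1 pen_C2 n K L / 2) A).

(* A bound on the indicator of the event where the oracle inequality may fail. *)
Definition exceptional (n : nat) (Pst P : nat -> nat -> R) (A : nat -> nat -> bool) : R :=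
  tail_ind n Pst (fun i j => Pst i j - P i j) (frob2 n Pst P / 12 + 3/2 * INR n) A +
  rsum n (fun k => rsum (S k) (fun l => net_tail n Pst (S k) (S l) A)).

Lemma net_tail_nonneg n Pst K L A : 0 <= net_tail n Pst K L A.
Proof. apply lsum_nonneg. intros; apply tail_ind_01. Qed.

Lemma net_tail_sum_nonneg n Pst A :
  0 <= rsum n (fun k => rsum (S k) (fun l => net_tail n Pst (S k) (S l) A)).
Proof. apply rsum_nonneg; intros; apply rsum_nonneg; intros; apply net_tail_nonneg. Qed.

Lemma tail_ind_le_exceptional n Pst P A :
  tail_ind n Pst (fun i j => Pst i j - P i j) (frob2 n Pst P / 12 + 3/2 * INR n) A
  <= exceptional n Pst P A.
Proof. unfold exceptional. pose proof (net_tail_sum_nonneg n Pst A). lra. Qed.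

Lemma exceptional_nonneg n Pst P A : 0 <= exceptional n Pst P A.
Proof.
  eapply Rle_trans; [|apply tail_ind_le_exceptional]. apply tail_ind_01.
Qed.

Lemma net_tail_le_exceptional n Pst P K L A : (1 <= L)%nat -> (L <= K)%nat -> (K <= n)%nat ->
  net_tail n Pst K L A <= exceptional n Pst P A.
Proof.
  intros HL HLK HK. unfold exceptional.
  pose proof (tail_ind_01 n Pst (fun i j => Pst i j - P i j) (frob2 n Pst P / 12 + 3/2 * INR n) A).
  enough (net_tail n Pst K L A <= rsum n (fun k => rsum (S k) (fun l => net_tail n Pst (S k) (S l) A)))
    by lra.
  eapply Rle_trans; [|apply (rsum_ge_term n _ (K - 1))]; try lia.
  2:{ intros; apply rsum_nonneg; intros; apply net_tail_nonneg. }
  eapply Rle_trans; [|apply (rsum_ge_term _ _ (L - 1))]; try lia.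
  2:{ intros; apply net_tail_nonneg. }
  replace (S (K - 1)) with K by lia. replace (S (L - 1)) with L by lia. lra.
Qed.

Lemma Expect_exceptional_le n Pst P : (2 <= n)%nat ->
  entries_in_01 n Pst -> sym_on n Pst -> entries_in_01 n P ->
  Expect n Pst (exceptional n Pst P) <= (1 + INR n * INR n) * exp (- (INR n / 32)).
Proof.
  intros Hn HPst HPsym HP. unfold exceptional. rewrite Expect_plus, Expect_rsum.
  assert (Hfirst : Expect n Pst (tail_ind n Pst (fun i j => Pst i j - P i j)
                     (frob2 n Pst P / 12 + 3/2 * INR n)) <= exp (- (INR n / 32))).
  { eapply Rle_trans; [apply Expect_tail_ind_diff_le; auto|]. apply exp_le. lra. }
  assert (Hnet : forall k l, (l <= k < n)%nat ->
            Expect n Pst (net_tail n Pst (S k) (S l)) <= exp (- (INR n / 32))).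
  { intros k l Hkl. unfold net_tail. rewrite Expect_lsum.
    eapply Rle_trans; [|apply (length_nbm_net_penalty n (S k) (S l)); lia].
    rewrite <- lsum_const. apply lsum_le. intros q _.
    eapply Rle_trans; [apply Expect_tail_ind_diff_le; auto; apply clip_01|]. apply exp_le. lra. }
  assert (Hall : rsum n (fun k => Expect n Pst (fun A =>
                    rsum (S k) (fun l => net_tail n Pst (S k) (S l) A)))
                 <= rsum n (fun _ => INR n * exp (- (INR n / 32)))).
  { apply rsum_le. intros k Hk. rewrite Expect_rsum.
    apply Rle_trans with (rsum (S k) (fun _ => exp (- (INR n / 32)))).
    - apply rsum_le. intros l Hl. apply Hnet; lia.
    - rewrite rsum_const. apply Rmult_le_compat_r; [left; apply exp_pos | apply le_INR; lia]. }
  rewrite rsum_const in Hall. lra.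
Qed.

Lemma oracle_or_exceptional n Pst P K L A Kh Lh Ph : (2 <= n)%nat ->
  entries_in_01 n Pst -> (1 <= L)%nat -> (L <= K)%nat -> (K <= n)%nat -> in_NBM n K L P ->
  is_argmin pen_C1 pen_C2 n A Kh Lh Ph ->
  frob2 n Ph Pst <= 3 * (frob2 n P Pst + Pen pen_C1 pen_C2 n K L) \/ 1 <= exceptional n Pst P A.
Proof.
  intros Hn HPst HL HLK HK HP (hL & hLK & hK & hPh & hmin).
  destruct (Rle_dec (noise_dot n Pst A (fun i j => Pst i j - P i j))
                    (frob2 n Pst P / 12 + 3/2 * INR n)) as [HnoiseP | HnoiseP].
  2:{ right. rewrite <- (tail_ind_gt n Pst _ _ A HnoiseP). apply tail_ind_le_exceptional. }
  assert (HG : (0 < net_resolution n)%nat)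
    by (unfold net_resolution; pose proof (Nat.pow_nonzero n 4); lia).
  destruct (nbm_net_cover n _ Kh Lh Ph HG hPh) as [q [Hq Hqapprox]].
  pose proof (in_NBM_entries_in_01 _ _ _ _ hPh) as HPh01.
  destruct (Rle_dec (noise_dot n Pst A (fun i j => clip q i j - Pst i j))
                    (frob2 n (clip q) Pst / 12 + Pen pen_C1 pen_C2 n Kh Lh / 2)) as [Hnoiseq | Hnoiseq].
  - left. destruct (net_error_bounds n Hn).
    apply (oracle_ineq_of_noise_bounds n A Pst P Ph (clip q) (net_error n) (3/2 * INR n)
             _ (Pen pen_C1 pen_C2 n Kh Lh)); auto.
    + intros i j Hi Hj. destruct (Hqapprox i j Hi Hj), (HPh01 i j Hi Hj).
      rewrite clip_id by lra. auto.
    + apply hmin; auto.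
    + pose proof (Pen_ge n K L Hn HL HLK HK). lra.
  - right. eapply Rle_trans; [|apply (net_tail_le_exceptional n Pst P Kh Lh A); auto].
    eapply Rle_trans; [|apply (lsum_ge_member _ _ q Hq); intros; apply tail_ind_01].
    cbv beta. rewrite tail_ind_gt by auto. lra.
Qed.

Lemma Prob_le_ge_of_exceptional n P X Y W r : entries_in_01 n P ->
  (forall A, 0 <= W A) -> (forall A, adj_sym A -> X A <= Y A \/ 1 <= W A) ->
  Expect n P W <= r -> Prob_le n P X Y >= 1 - r.
Proof.
  intros HP HW HXW Hr. apply Rle_ge. unfold Prob_le.
  apply Rle_trans with (Expect n P (fun A => 1 + (-1) * W A)).
  { rewrite Expect_plus, Expect_scal, Expect_const. lra. }
  apply Expect_le; auto. intros A HA. pose proof (HW A).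
  destruct (HXW A HA), (Rle_dec (X A) (Y A)); lra.
Qed.

Lemma Expect_le_of_exceptional n P X W b M r : entries_in_01 n P -> 0 <= b -> 0 <= M ->
  (forall A, 0 <= W A) -> (forall A, adj_sym A -> X A <= M) ->
  (forall A, adj_sym A -> X A <= b \/ 1 <= W A) ->
  Expect n P W <= r -> Expect n P X <= b + M * r.
Proof.
  intros HP Hb HM HW HXM HXW Hr. apply Rle_trans with (Expect n P (fun A => b + M * W A)).
  2:{ rewrite Expect_plus, Expect_scal, Expect_const. apply Rplus_le_compat_l, Rmult_le_compat_l; auto. }
  apply Expect_le; auto. intros A HA. pose proof (HW A). pose proof (HXM A HA).
  destruct (HXW A HA); nra.
Qed.

Lemma one_plus_sq_le_sq_log2 n : (2 <= n)%nat ->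
  1 + INR n * INR n <= INR n ^ 2 * (ln (INR n) / ln 2) + 1.
Proof.
  intros Hn. assert (Hx : 2 <= INR n) by (replace 2 with (INR 2) by (simpl; ring); apply le_INR; auto).
  pose proof ln_lt_2.
  assert (1 <= ln (INR n) / ln 2).
  { apply Rmult_le_reg_r with (ln 2); [lra|].
    replace (ln (INR n) / ln 2 * ln 2) with (ln (INR n)) by (field; lra).
    rewrite Rmult_1_l. apply ln_le; lra. }
  simpl. nra.
Qed.

Lemma sq_mul_one_plus_sq_le_pow5 n : (2 <= n)%nat ->
  INR n * INR n * (1 + INR n * INR n) <= INR n ^ 5.
Proof.
  intros Hn. assert (Hx : 2 <= INR n) by (replace 2 with (INR 2) by (simpl; ring); apply le_INR; auto).
  assert (0 <= INR n * INR n * (INR n * INR n * (INR n - 1) - 1)) by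
    (apply Rmult_le_pos; nra).
  simpl. nra.
Qed.

Theorem theorem1 :
  exists C1 C2 : R, 0 < C1 /\ 0 < C2 /\
  forall (n Ks Ls : nat) (Pstar : nat -> nat -> R)
         (zs cs : nat -> nat) (B H : nat -> nat -> R) (lam0 : R),
    (2 <= n)%nat -> (1 <= Ls)%nat -> (Ls <= Ks)%nat -> (Ks <= n)%nat ->
    (forall i j, (i < n)%nat -> (j < n)%nat -> Pstar i j = Pstar j i) ->
    NBM_rep n Ks Ls Pstar zs cs B H ->
    0 < lam0 -> min_sing_value_ge Ks B lam0 ->
    A2_lin_indep n Ks Ls zs H ->
    forall (Kh Lh : (nat -> nat -> bool) -> nat)
           (Ph : (nat -> nat -> bool) -> nat -> nat -> R),
    (forall A : nat -> nat -> bool, (forall i j, A i j = A j i) ->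
       is_argmin C1 C2 n A (Kh A) (Lh A) (Ph A)) ->
    forall (K L : nat) (P : nat -> nat -> R),
      (1 <= L)%nat -> (L <= K)%nat -> (K <= n)%nat -> in_NBM n K L P ->
      Prob_le n Pstar (fun A => frob2 n (Ph A) Pstar)
                      (fun _ => 3 * (frob2 n P Pstar + Pen C1 C2 n K L))
        >= 1 - (INR n ^ 2 * (ln (INR n) / ln 2) + 1) * exp (- INR n / 32)
      /\
      Expect n Pstar (fun A => frob2 n (Ph A) Pstar)
        <= 3 * (frob2 n P Pstar + Pen C1 C2 n K L) + INR n ^ 5 * exp (- INR n / 32).
Proof.
  exists pen_C1, pen_C2. split; [unfold pen_C1; lra|]. split; [unfold pen_C2; lra|].
  intros n Ks Ls Pst zs cs B H lam0 Hn _ _ _ HPsym Hrep _ _ _ Kh Lh Ph Hargmin K L P HL HLK HK HP.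
  assert (HPst : entries_in_01 n Pst)
    by (apply (in_NBM_entries_in_01 n Ks Ls); exists zs, cs, B, H; exact Hrep).
  set (bound := 3 * (frob2 n P Pst + Pen pen_C1 pen_C2 n K L)).
  set (eps := exp (- (INR n / 32))).
  assert (Hcases : forall A, adj_sym A -> frob2 n (Ph A) Pst <= bound \/ 1 <= exceptional n Pst P A)
    by (intros A HA; apply (oracle_or_exceptional n Pst P K L A (Kh A) (Lh A)); auto).
  assert (Hsq : forall A, adj_sym A -> frob2 n (Ph A) Pst <= INR n * INR n).
  { intros A HA. destruct (Hargmin A HA) as (_ & _ & _ & HPh & _).
    apply frob2_le_sq; auto. apply (in_NBM_entries_in_01 _ _ _ _ HPh). }
  pose proof (Expect_exceptional_le n Pst P Hn HPst HPsym (in_NBM_entries_in_01 _ _ _ _ HP)) as Hexc.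
  pose proof (one_plus_sq_le_sq_log2 n Hn). pose proof (sq_mul_one_plus_sq_le_pow5 n Hn).
  assert (Heps : 0 < eps) by apply exp_pos.
  replace (- INR n / 32) with (- (INR n / 32)) by field. fold eps. split.
  - apply Rge_trans with (1 - (1 + INR n * INR n) * eps); [|apply Rle_ge; nra].
    apply (Prob_le_ge_of_exceptional _ _ _ _ (exceptional n Pst P)); auto using exceptional_nonneg.
  - apply Rle_trans with (bound + INR n * INR n * ((1 + INR n * INR n) * eps)); [|nra].
    apply (Expect_le_of_exceptional _ _ _ (exceptional n Pst P)); auto using exceptional_nonneg.
    + pose proof (frob2_nonneg n P Pst). pose proof (Pen_ge n K L Hn HL HLK HK).
      pose proof (pos_INR n). unfold bound. lra.
    + apply Rmult_le_pos; apply pos_INR.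
Qed.
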